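(* If $\|W\|_2^2\le B_W^2$ and $0\le u_i\le B_u$ for all $i$, then the 2-norm of the gradient of $f$ and of each stochastic gradient $\nabla f_{ik}$ is bounded by $$B_f=N\max\{1,e^{B_u}-1\}+2\big(Ne^{B_u}B_x+\mu\max_k\{\beta_k\}B_W\big).$$
   Context: Data: $(y_i,x_i)$, $i=1,\dots,N$, $x_i\in\mathbb{R}^D$, $y_i\in\{1,\dots,K\}$, $K\ge2$; $\mu>0$; $u\in\mathbb{R}^N$, $W=[w_1,\dots,w_K]\in\mathbb{R}^{D\times K}$ with Frobenius norm $\|W\|_2$. Let $n_j=|\{i:y_i=j\}|$, $\beta_j=\frac{N}{n_j+(N-n_j)/(K-1)}$, and for $k\ne y_i$ $$f_{ik}(u,W)=N\big(u_i+e^{-u_i}+(K-1)e^{x_i^\top(w_k-w_{y_i})-u_i}\big)+\tfrac{\mu}{2}\big(\beta_{y_i}\|w_{y_i}\|_2^2+\beta_k\|w_k\|_2^2\big),$$ and $f=\mathbb{E}_{ik}[f_{ik}]$ with $i$ uniform on $\{1,\dots,N\}$ and $k$ uniform on $\{1,\dots,K\}\setminus\{y_i\}$. $B_W^2=\frac{2}{\mu}N\log K$, $B_x=\max_i\|x_i\|_2$, $B_u=\log(1+(K-1)e^{2B_xB_W})$. *)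

From HB Require Import structures.
From mathcomp Require Import all_boot all_order all_algebra.
From mathcomp Require Import all_classical all_reals all_analysis.
Set Implicit Arguments. Unset Strict Implicit. Unset Printing Implicit Defensive.
Import Order.TTheory GRing.Theory Num.Theory.
Local Open Scope ring_scope.

Section Defs.
Variable R : realType.
Variables (N D K : nat).

(* Parameters: u : R^N as 'I_N -> R, W : R^{D x K} as 'I_D -> 'I_K -> R,
   column k of W is w_k = (W d k)_d.  Data x_i = (x i d)_d, y i : 'I_K. *)

Definition updu (u : 'I_N -> R) (j : 'I_N) (t : R) : 'I_N -> R :=
  fun l => if l == j then t else u l.

Definition updW (W : 'I_D -> 'I_K -> R) (d : 'I_D) (k : 'I_K) (t : R)
  : 'I_D -> 'I_K -> R :=
  fun d' k' => if (d' == d) && (k' == k) then t else W d' k'.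

Definition grad_norm2 (F : ('I_N -> R) -> ('I_D -> 'I_K -> R) -> R)
  (u : 'I_N -> R) (W : 'I_D -> 'I_K -> R) : R :=
  \sum_(j < N) (derive1 (fun t => F (updu u j t) W) (u j)) ^+ 2
  + \sum_(d < D) \sum_(k < K)
      (derive1 (fun t => F u (updW W d k t)) (W d k)) ^+ 2.

Definition grad_norm F u W : R := Num.sqrt (grad_norm2 F u W).

Definition class_count (y : 'I_N -> 'I_K) (j : 'I_K) : nat :=
  #|[set i | y i == j]|.

Definition beta (y : 'I_N -> 'I_K) (j : 'I_K) : R :=
  N%:R / ((class_count y j)%:R + (N - class_count y j)%:R / (K.-1)%:R).

Definition sqnormW (W : 'I_D -> 'I_K -> R) : R :=
  \sum_(d < D) \sum_(k < K) W d k ^+ 2.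

Definition f_ik (mu : R) (x : 'I_N -> 'I_D -> R) (y : 'I_N -> 'I_K)
  (i : 'I_N) (k : 'I_K) (u : 'I_N -> R) (W : 'I_D -> 'I_K -> R) : R :=
  N%:R * (u i + expR (- u i)
          + (K.-1)%:R * expR (\sum_(d < D) x i d * (W d k - W d (y i)) - u i))
  + mu / 2 * (beta y (y i) * \sum_(d < D) W d (y i) ^+ 2
              + beta y k * \sum_(d < D) W d k ^+ 2).

(* f = E_{ik}[f_ik], i uniform on 'I_N, k uniform on 'I_K \ {y i} *)
Definition f_full (mu : R) x y u W : R :=
  \sum_(i < N) (N%:R^-1 *
     \sum_(k < K | k != y i) ((K.-1)%:R^-1 * f_ik mu x y i k u W)).

Definition B_W (mu : R) : R := Num.sqrt (2 / mu * N%:R * ln K%:R).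

Definition B_x (x : 'I_N -> 'I_D -> R) : R :=
  \big[Num.max/0]_(i < N) Num.sqrt (\sum_(d < D) x i d ^+ 2).

Definition B_u (mu : R) x : R :=
  ln (1 + (K.-1)%:R * expR (2 * B_x x * B_W mu)).

Definition B_f (mu : R) x y : R :=
  N%:R * Num.max 1 (expR (B_u mu x) - 1)
  + 2 * (N%:R * expR (B_u mu x) * B_x x
         + mu * (\big[Num.max/0]_(k < K) beta y k) * B_W mu).

End Defs.

From HB Require Import structures.
From mathcomp Require Import all_boot all_order all_algebra.
From mathcomp Require Import all_classical all_reals all_analysis.
From mathcomp Require Import ring lra.
Set Implicit Arguments.
Unset Strict Implicit.
Unset Printing Implicit Defensive.
Import Order.TTheory GRing.Theory Num.Theory.
Local Open Scope ring_scope.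

(* Each stochastic objective f_ik depends on u only through u_i and on W only
   through the columns w_k and w_(y_i), so its gradient has one u-entry
   N (1 - e^(-u_i) - E), with E = (K-1) e^(x_i.(w_k - w_(y_i)) - u_i), and two
   nonzero columns +-N E x_i + mu beta w.  Cauchy-Schwarz and the bounds on x
   and W give 0 <= E <= e^B_u - 1, hence |N (1 - e^(-u_i) - E)| <= N max(1,
   e^B_u - 1) and each column has squared norm at most 2 (a^2 + b^2), with
   a = N e^B_u B_x and b = mu max beta B_W; summing, the squared norm is at
   most B_f^2.  The full gradient is a convex combination of the stochastic
   ones, so by Jensen's inequality applied coordinatewise its squared norm is
   at most the average of theirs. *)

Section SumsOfSquares.
Variables (R : realFieldType) (I : finType).
Implicit Types (a b c : I -> R).

Lemma sumr_sqr_ge0 a : 0 <= \sum_i a i ^+ 2.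
Proof. by apply: sumr_ge0 => i _; exact: sqr_ge0. Qed.

Lemma sqr_wsum_le c a : (forall i, 0 <= c i) -> \sum_i c i = 1 ->
  (\sum_i c i * a i) ^+ 2 <= \sum_i c i * a i ^+ 2.
Proof.
move=> c_ge0 c_sum1; set m := \sum_i c i * a i.
have : 0 <= \sum_i c i * (a i - m) ^+ 2.
  by apply: sumr_ge0 => i _; rewrite mulr_ge0 ?sqr_ge0.
rewrite (eq_bigr (fun i => c i * a i ^+ 2 - 2 * m * (c i * a i) + m ^+ 2 * c i))
  => [|i _]; last by ring.
rewrite big_split sumrB /= -!mulr_sumr -/m c_sum1; lra.
Qed.

Lemma sum_mul_sum (f g : I -> R) :
  (\sum_i f i) * (\sum_j g j) = \sum_i \sum_j f i * g j.
Proof. by rewrite mulr_suml; apply: eq_bigr => i _; rewrite mulr_sumr. Qed.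

(* Lagrange's identity: the Cauchy-Schwarz defect is half of the sum of the
   squares [(a i * b j - a j * b i) ^+ 2]. *)
Lemma sqr_sum_mul_le a b :
  (\sum_i a i * b i) ^+ 2 <= (\sum_i a i ^+ 2) * (\sum_i b i ^+ 2).
Proof.
pose G i j := a i ^+ 2 * b j ^+ 2 - (a i * b i) * (a j * b j).
have G_sum : \sum_i \sum_j G i j =
    (\sum_i a i ^+ 2) * (\sum_i b i ^+ 2) - (\sum_i a i * b i) ^+ 2.
  rewrite expr2 !sum_mul_sum -sumrB; apply: eq_bigr => i _; exact: sumrB.
have : 0 <= \sum_i \sum_j (a i * b j - a j * b i) ^+ 2.
  by apply: sumr_ge0 => i _; exact: sumr_sqr_ge0.
have -> : \sum_i \sum_j (a i * b j - a j * b i) ^+ 2 =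
    \sum_i \sum_j G i j + \sum_i \sum_j G j i.
  rewrite -big_split; apply: eq_bigr => i _ /=.
  rewrite -big_split; apply: eq_bigr => j _ /=; rewrite /G; ring.
rewrite [in X in _ <= _ + X]exchange_big G_sum; lra.
Qed.

Lemma sum_sqr_lincomb_le (al be : R) a b :
  \sum_i (al * a i + be * b i) ^+ 2
    <= 2 * (al ^+ 2 * \sum_i a i ^+ 2 + be ^+ 2 * \sum_i b i ^+ 2).
Proof.
rewrite mulrDr !mulr_sumr -big_split /=; apply: ler_sum => i _.
have := sqr_ge0 (al * a i - be * b i); lra.
Qed.

End SumsOfSquares.

Lemma sqrtr_le (R : rcfType) (a b : R) :
  0 <= b -> a <= b ^+ 2 -> Num.sqrt a <= b.
Proof.
by move=> b_ge0 ab; rewrite -(ger0_norm b_ge0) -sqrtr_sqr; exact: ler_wsqrtr.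
Qed.

Lemma abs_sum_mul_le (R : rcfType) (I : finType) (a b : I -> R) :
  `|\sum_i a i * b i|
    <= Num.sqrt (\sum_i a i ^+ 2) * Num.sqrt (\sum_i b i ^+ 2).
Proof.
rewrite -sqrtrM ?sumr_sqr_ge0 // -sqrtr_sqr; exact/ler_wsqrtr/sqr_sum_mul_le.
Qed.

Section Derivatives.
Variable R : realType.

Lemma derive1_wsum (I : finType) (c : I -> R) (h : I -> R -> R) t :
  (forall p, derivable (h p) t 1) ->
  derive1 (fun s => \sum_p c p * h p s) t = \sum_p c p * derive1 (h p) t.
Proof.
move=> dh; rewrite derive1E; under eq_bigr do rewrite derive1E.
apply: derive_val; rewrite -[fun s => _](fct_sumE _ _ (fun p s => c p * h p s)).
elim/big_ind2 : _ => [|f df g dg Hf Hg|p _]; first exact: is_derive_cst.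
- exact: is_deriveD.
- exact: (is_deriveZ (c p) (derivableP (dh p))).
Qed.

Lemma derive1_val (f : R -> R) (t df : R) :
  is_derive t 1 f df -> derive1 f t = df.
Proof. by move=> ?; rewrite derive1E derive_val. Qed.

Variables N D K : nat.

Lemma grad_norm2_wsum_le (I : finType) (c : I -> R)
    (F : I -> ('I_N -> R) -> ('I_D -> 'I_K -> R) -> R) u W :
  (forall p, 0 <= c p) -> \sum_p c p = 1 ->
  (forall p j, derivable (fun t => F p (updu u j t) W) (u j) 1) ->
  (forall p d k, derivable (fun t => F p u (updW W d k t)) (W d k) 1) ->
  grad_norm2 (fun u W => \sum_p c p * F p u W) u W
    <= \sum_p c p * grad_norm2 (F p) u W.
Proof.
move=> c_ge0 c_sum1 dFu dFW; rewrite /grad_norm2.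
under eq_bigr do rewrite derive1_wsum //.
under [X in _ + X <= _]eq_bigr do under eq_bigr do rewrite derive1_wsum //.
rewrite [X in _ <= X](_ : _ =
    \sum_j \sum_p c p * derive1 (fun t => F p (updu u j t) W) (u j) ^+ 2
    + \sum_d \sum_k \sum_p
        c p * derive1 (fun t => F p u (updW W d k t)) (W d k) ^+ 2).
  apply: lerD; first by apply: ler_sum => j _; exact: sqr_wsum_le.
  by apply: ler_sum => d _; apply: ler_sum => k _; exact: sqr_wsum_le.
under eq_bigr do rewrite mulrDr !mulr_sumr; rewrite big_split /=.
congr (_ + _); first exact: exchange_big.
rewrite exchange_big; apply: eq_bigr => d _.
by under eq_bigr do rewrite mulr_sumr; exact: exchange_big.
Qed.

End Derivatives.

Section StochasticGradient.
Variables (R : realType) (N D K : nat) (mu : R).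
Variables (x : 'I_N -> 'I_D -> R) (y : 'I_N -> 'I_K).
Variables (u : 'I_N -> R) (W : 'I_D -> 'I_K -> R).

Definition margin i k := \sum_(d < D) x i d * (W d k - W d (y i)).

Definition exp_term i k := (K.-1)%:R * expR (margin i k - u i).

Definition partial_u i k (j : 'I_N) :=
  if j == i then N%:R * (1 - expR (- u i) - exp_term i k) else 0.

Definition partial_W i k d0 k0 :=
  N%:R * exp_term i k * (x i d0 * ((k == k0)%:R - (y i == k0)%:R))
  + mu * W d0 k0
    * (beta R y (y i) * (y i == k0)%:R + beta R y k * (k == k0)%:R).

Lemma is_derive_f_ik_u i k j :
  is_derive (u j) 1 (fun t => f_ik mu x y i k (updu u j t) W) (partial_u i k j).
Proof.
rewrite /partial_u /f_ik /updu /=; have [->|_] := eqVneq j i.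
  by apply: is_derive_eq; rewrite /exp_term /margin -![_ *: _]/(_ * _); ring.
exact: is_derive_cst.
Qed.

Lemma updWE d0 k0 t d k :
  updW W d0 k0 t d k = W d k + ((d == d0) && (k == k0))%:R * (t - W d0 k0).
Proof.
rewrite /updW; have [->|_] := eqVneq d d0; have [->|_] := eqVneq k k0;
  by rewrite /= ?mul0r ?addr0 // mul1r addrC subrK.
Qed.

Lemma margin_updW i k d0 k0 t :
  \sum_(d < D) x i d * (updW W d0 k0 t d k - updW W d0 k0 t d (y i))
  = margin i k + (t - W d0 k0) * (x i d0 * ((k == k0)%:R - (y i == k0)%:R)).
Proof.
rewrite /margin (bigD1 d0) //= [in RHS](bigD1 d0) //= !updWE eqxx /=.
under eq_bigr => d /negbTE nd do rewrite !updWE nd /= !mul0r !addr0.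
ring.
Qed.

Lemma sum_sqr_updW k d0 k0 t :
  \sum_(d < D) updW W d0 k0 t d k ^+ 2
  = \sum_(d < D) W d k ^+ 2 + (k == k0)%:R * (t ^+ 2 - W d0 k0 ^+ 2).
Proof.
rewrite (bigD1 d0) //= [in RHS](bigD1 d0) //= !updWE eqxx /=.
under eq_bigr => d /negbTE nd do rewrite !updWE nd /= !mul0r !addr0.
by have [->|_] := eqVneq k k0; rewrite /= ?mul0r ?mul1r; ring.
Qed.

Lemma is_derive_f_ik_W i k d0 k0 :
  is_derive (W d0 k0) 1 (fun t => f_ik mu x y i k u (updW W d0 k0 t))
    (partial_W i k d0 k0).
Proof.
rewrite /f_ik; under eq_fun do rewrite margin_updW !sum_sqr_updW.
apply: is_derive_eq; rewrite -![_ *: _]/(_ * _) subrr mul0r addr0.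
by rewrite /partial_W /exp_term; field.
Qed.

Lemma grad_norm2_f_ik i k : k != y i ->
  grad_norm2 (f_ik mu x y i k) u W =
    (N%:R * (1 - expR (- u i) - exp_term i k)) ^+ 2
    + \sum_d (N%:R * exp_term i k * x i d + mu * beta R y k * W d k) ^+ 2
    + \sum_d (- (N%:R * exp_term i k) * x i d
              + mu * beta R y (y i) * W d (y i)) ^+ 2.
Proof.
move=> kyi; rewrite /grad_norm2 -addrA; congr (_ + _).
  under eq_bigr do rewrite (derive1_val (is_derive_f_ik_u i k _)).
  rewrite (bigD1 i) //= big1 ?addr0 => [|j /negbTE ji].
    by rewrite /partial_u eqxx.
  by rewrite /partial_u ji expr2 mul0r.
rewrite -big_split; apply: eq_bigr => d _ /=.
under eq_bigr do rewrite (derive1_val (is_derive_f_ik_W i k d _)).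
rewrite (bigD1 k) // (bigD1 (y i)) /=; last by rewrite eq_sym.
have yik : (y i == k) = false by rewrite eq_sym; exact: negbTE.
rewrite big1 ?addr0 => [|k0 /andP [k0k k0y]].
  rewrite /partial_W !eqxx (negbTE kyi) yik /=.
  by congr (_ ^+ 2 + _ ^+ 2); ring.
by rewrite /partial_W eq_sym (negbTE k0k) eq_sym (negbTE k0y) /=; ring.
Qed.

Local Notation Bx := (B_x x).
Local Notation BW := (B_W N K mu).
Local Notation Bu := (B_u K mu x).
Local Notation beta_max := (\big[Num.max/0]_(k < K) beta R y k).

Lemma row_norm_le i : Num.sqrt (\sum_d x i d ^+ 2) <= Bx.
Proof. exact: (le_bigmax _ (fun i => Num.sqrt (\sum_d x i d ^+ 2))). Qed.

Lemma exp_term_ge0 i k : 0 <= exp_term i k.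
Proof. by rewrite mulr_ge0 ?expR_ge0. Qed.

Lemma beta_ge0 k : 0 <= beta R y k.
Proof. by rewrite divr_ge0 // addr_ge0 // divr_ge0. Qed.

Lemma beta_le_max k : beta R y k <= beta_max.
Proof. exact: (le_bigmax _ (beta R y)). Qed.

Hypothesis hW : sqnormW W <= BW ^+ 2.

Lemma col_sqr_le k : \sum_d W d k ^+ 2 <= BW ^+ 2.
Proof.
apply: le_trans hW; apply: ler_sum => d _.
by rewrite (bigD1 k) //= lerDl; apply: sumr_ge0 => *; exact: sqr_ge0.
Qed.

Lemma margin_le i k : margin i k <= 2 * Bx * BW.
Proof.
have BW_ge0 : 0 <= BW := sqrtr_ge0 _.
have col_le k' : `|\sum_d x i d * W d k'| <= Bx * BW.
  apply: le_trans (abs_sum_mul_le _ _) _.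
  apply: ler_pM; rewrite ?sqrtr_ge0 ?row_norm_le //.
  exact/sqrtr_le/col_sqr_le.
rewrite /margin; under eq_bigr do rewrite mulrBr; rewrite sumrB.
set s := \sum_d x i d * W d k; set s' := \sum_d x i d * W d (y i).
have := ler_normB s s'; have := ler_norm (s - s').
have := col_le k; have := col_le (y i); lra.
Qed.

Hypothesis hu : forall i, 0 <= u i.

Lemma exp_term_le i k : exp_term i k <= expR Bu - 1.
Proof.
have Bu_def : expR Bu = 1 + (K.-1)%:R * expR (2 * Bx * BW).
  by rewrite lnK // posrE ltr_pwDl // mulr_ge0 ?expR_ge0.
rewrite Bu_def [1 + _]addrC addrK ler_wpM2l // ler_expR.
have := margin_le i k; have := hu i; lra.
Qed.

Lemma partial_u_sqr_le i k :
  (N%:R * (1 - expR (- u i) - exp_term i k)) ^+ 2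
    <= (N%:R * Num.max 1 (expR Bu - 1)) ^+ 2.
Proof.
rewrite !exprMn ler_wpM2l ?sqr_ge0 //.
have := exp_term_ge0 i k; have := exp_term_le i k; have := expR_gt0 (- u i).
have : expR (- u i) <= 1 by rewrite -expR0 ler_expR oppr_le0.
have : 1 <= Num.max 1 (expR Bu - 1) by rewrite le_max lexx.
have : expR Bu - 1 <= Num.max 1 (expR Bu - 1) by rewrite le_max lexx orbT.
nra.
Qed.

Hypothesis hmu : 0 < mu.

Lemma partial_W_sum_le i k a b :
  `|a| <= N%:R * expR Bu -> 0 <= b <= mu * beta_max ->
  \sum_d (a * x i d + b * W d k) ^+ 2
    <= 2 * ((N%:R * expR Bu * Bx) ^+ 2 + (mu * beta_max * BW) ^+ 2).
Proof.
move=> a_le /andP[b_ge0 b_le]; apply: le_trans (sum_sqr_lincomb_le _ _ _ _) _.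
rewrite ler_pM2l // -(real_normK (num_real a)) (exprMn _ (_ * _) Bx).
rewrite (exprMn _ (_ * _) BW).
have sqr_le (s t : R) : 0 <= s <= t -> s ^+ 2 <= t ^+ 2.
  by case/andP => s_ge0 st; rewrite ler_pXn2r ?nnegrE // (le_trans s_ge0).
have x_le : \sum_d x i d ^+ 2 <= Bx ^+ 2.
  rewrite -(sqr_sqrtr (sumr_sqr_ge0 _)).
  by apply: sqr_le; rewrite sqrtr_ge0 row_norm_le.
apply: lerD; apply: ler_pM; rewrite ?sqr_ge0 ?sumr_sqr_ge0 ?x_le ?col_sqr_le //.
  by apply: sqr_le; rewrite normr_ge0 a_le.
by apply: sqr_le; rewrite b_ge0 b_le.
Qed.

Lemma grad_norm2_f_ik_le i k :
  k != y i -> grad_norm2 (f_ik mu x y i k) u W <= B_f mu x y ^+ 2.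
Proof.
move=> kyi; rewrite grad_norm2_f_ik //.
have NE_le : `|N%:R * exp_term i k| <= N%:R * expR Bu.
  rewrite ger0_norm ?mulr_ge0 ?exp_term_ge0 //; apply: ler_wpM2l => //.
  have := exp_term_le i k; lra.
have mu_beta_le k' : 0 <= mu * beta R y k' <= mu * beta_max.
  by rewrite mulr_ge0 ?beta_ge0 ?(ltW hmu) //= ler_pM2l ?beta_le_max.
have := partial_u_sqr_le i k.
have := partial_W_sum_le i k NE_le (mu_beta_le k).
have NE_le' : `|- (N%:R * exp_term i k)| <= N%:R * expR Bu by rewrite normrN.
have := partial_W_sum_le i (y i) NE_le' (mu_beta_le (y i)).
rewrite /B_f; set M := N%:R * Num.max _ _.
set a := N%:R * _ * Bx; set b := mu * _ * BW.
have M_ge0 : 0 <= M by rewrite /M mulr_ge0 // le_max ler01.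
have a_ge0 : 0 <= a.
  by rewrite /a !mulr_ge0 ?expR_ge0 ?(le_trans (sqrtr_ge0 _) (row_norm_le i)).
have b_ge0 : 0 <= b.
  rewrite /b !mulr_ge0 ?(ltW hmu) ?sqrtr_ge0 //.
  exact: le_trans (beta_ge0 k) (beta_le_max k).
nra.
Qed.

End StochasticGradient.

Section Expectation.
Variables (R : realType) (N D K : nat) (mu : R).
Variables (x : 'I_N -> 'I_D -> R) (y : 'I_N -> 'I_K).

Definition weight i k : R := if k != y i then (N%:R * (K.-1)%:R)^-1 else 0.

Lemma weight_ge0 i k : 0 <= weight i k.
Proof. by rewrite /weight; case: ifP; rewrite // invr_ge0 mulr_ge0. Qed.

Lemma sum_weight : (0 < N)%N -> (2 <= K)%N ->
  \sum_(p : 'I_N * 'I_K) weight p.1 p.2 = 1.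
Proof.
move=> N_gt0 K_ge2; rewrite -pair_bigA /=.
under eq_bigr do rewrite -big_mkcond /= sumr_const cardC1 card_ord.
rewrite sumr_const card_ord -mulrnA -(mulr_natr _ (K.-1 * N)) mulnC natrM.
rewrite mulVf //.
by rewrite mulf_neq0 // pnatr_eq0 -lt0n // -ltnS prednK // ltnW.
Qed.

Lemma f_full_wsum : f_full mu x y =
  fun u W => \sum_(p : 'I_N * 'I_K) weight p.1 p.2 * f_ik mu x y p.1 p.2 u W.
Proof.
apply/funext => u; apply/funext => W.
rewrite -(pair_bigA _ (fun i k => weight i k * f_ik mu x y i k u W)) /=.
apply: eq_bigr => i _; rewrite big_mkcond mulr_sumr; apply: eq_bigr => k _ /=.
by rewrite /weight; case: ifP; rewrite ?mulr0 ?mul0r // invfM mulrA.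
Qed.

Lemma B_f_ge0 : 0 < mu -> 0 <= B_f mu x y.
Proof.
move=> mu_gt0; have Bx_ge0 : 0 <= B_x x := bigmax_ge_id _ _ _ _.
have beta_max_ge0 : 0 <= \big[Num.max/0]_(k < K) beta R y k.
  exact: bigmax_ge_id.
by rewrite addr_ge0 ?mulr_ge0 ?addr_ge0 ?mulr_ge0 ?expR_ge0 ?sqrtr_ge0
  ?(ltW mu_gt0).
Qed.

End Expectation.

Theorem lemma4 (R : realType) (N D K : nat) (hN : (0 < N)%N) (hK : (2 <= K)%N)
  (x : 'I_N -> 'I_D -> R) (y : 'I_N -> 'I_K) (mu : R) (hmu : 0 < mu)
  (u : 'I_N -> R) (W : 'I_D -> 'I_K -> R)
  (hW : sqnormW W <= B_W N K mu ^+ 2)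
  (hu : forall i, 0 <= u i <= B_u K mu x) :
  grad_norm (f_full mu x y) u W <= B_f mu x y
  /\ (forall (i : 'I_N) (k : 'I_K), k != y i ->
        grad_norm (f_ik mu x y i k) u W <= B_f mu x y).
Proof.
have u_ge0 i : 0 <= u i by case/andP: (hu i).
have f_ik_le := grad_norm2_f_ik_le x hW u_ge0 hmu.
have Bf_ge0 := B_f_ge0 x y hmu.
split; last by move=> i k kyi; apply: sqrtr_le => //; exact: f_ik_le.
apply: sqrtr_le => //; rewrite f_full_wsum.
apply: le_trans (grad_norm2_wsum_le _ _ _ _) _.
- by move=> p; exact: weight_ge0.
- exact: sum_weight hN hK.
- by move=> p j; case: (is_derive_f_ik_u mu x y u W p.1 p.2 j).
- by move=> p d k; case: (is_derive_f_ik_W mu x y u W p.1 p.2 d k).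
rewrite -[X in _ <= X]mul1r -(sum_weight _ y hN hK) mulr_suml.
apply: ler_sum => -[i k] _; rewrite /weight /=.
case: ifP => [kyi|_]; rewrite ?mul0r //.
by rewrite ler_wpM2l ?f_ik_le ?invr_ge0 ?mulr_ge0.
Qed.
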